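(* Let $S$ be an inverse monoid with identity element $1$, and let $(X,E(S),p)$ be a presheaf of geodesic metric spaces on which $S$ acts properly and coboundedly. Then: (1) there exists a finite quasi-generating set $\mathcal{M}\subseteq S$; (2) there exists $x_1\in X_1$ such that the orbit map $(S,d_{\mathcal{M}})\to (X,d)$, $s\mapsto x_1\cdot s$, is an order-preserving quasi-isometry, where $d_{\mathcal M}$ is the Cayley metric associated to $\mathcal M$.
   Context: An inverse semigroup is a semigroup $S$ in which every $s$ has a unique $s^{-1}\in S$ with $ss^{-1}s=s$ and $s^{-1}ss^{-1}=s^{-1}$; an inverse monoid is one with an identity $1$. $E(S)$ is the set of idempotents ($e e=e$); idempotents commute. The natural partial order on $S$ is $s\le t$ iff $s=et$ for some $e\in E(S)$; $E(S)$ is a meet-semilattice with meet $ef$. Write $\mathbf{d}(s)=s^{-1}s$. Green's relation $\mathcal L$: $(s,t)\in\mathcal L$ iff $s^{-1}s=t^{-1}t$. Presheaf: for a meet-semilattice $E$, a presheaf $(X,E,p)$ is a set $X$ with maps $p\colon X\to E$ and $X\times E\to X$, $(x,e)\mapsto x\cdot e$, such that $(x\cdot e)\cdot f=x\cdot ef$, $x\cdot p(x)=x$, and $p(x\cdot e)=p(x)e$. Fibers are $X_e=p^{-1}(e)$. $X$ is partially ordered by $x\le y$ iff $x=y\cdot p(x)$. A presheaf of metric spaces is such a presheaf with $p$ surjective, each fiber $X_e$ a metric space with metric $d_e$, and $d_e(x,y)\ge d_{ef}(x\cdot f,y\cdot f)$ for all $x,y\in X_e$, $f\in E$. Set $d(x,y)=d_e(x,y)$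 if $x,y\in X_e$ and $d(x,y)=\infty$ if $x,y$ lie in different fibers. It is geodesic if whenever $D=d(x,y)<\infty$ there is an isometric embedding $\gamma\colon[0,D]\to X$ with $\gamma(0)=x$, $\gamma(D)=y$. Action: $S$ acts on a presheaf of metric spaces $(X,E(S),p)$ if there is a right action $X\times S\to X$ (so $(x\cdot s)\cdot t=x\cdot(st)$) extending the presheaf map $X\times E(S)\to X$, such that $p(x\cdot s)=s^{-1}p(x)s$, and $d_e(x,y)\ge d_{s^{-1}es}(x\cdot s,y\cdot s)$ for all $x,y\in X_e$, $s\in S$. The action is proper if for every $y_1\in X_1$ and $R\ge0$ there is a finite $\mathcal C\subseteq S$ with $\{s\in S: d(y_1\cdot s,y_1\cdot s^{-1}s)\le R\}\subseteq \mathcal C E(S)=\{ce: c\in\mathcal C, e\in E(S)\}$. It is cobounded if there exist $x_1\in X_1$ and $T\ge0$ with $B(x_1,T)\cdot S=X$, where $B(x_1,T)$ is the ball in $(X,d)$. A quasi-generating set is a symmetric subset $\mathcal M=\mathcal M^{-1}\subseteq S$ such that $S$ is generated as a semigroup by $\mathcal M\cup E(S)$. The Cayley metric $d_{\mathcal M}$ on $S$: $d_{\mathcal M}(s,t)=\infty$ if $(s,t)\notin\mathcal L$; otherwise it is the path distance between $s$ and $t$ in the graph whose vertex set is the $\mathcal L$-class of $s$ and where $u,v$ are joined by an edge whenever $gu=v$ for some $g\in\mathcal M$ (edges of length 1). A map $f$ between extended metric spaces $(A,d_A)$, $(B,d_B)$ is a quasi-isometry if there are constants $L\ge1,C\ge0$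 such that $d_A(a,a')<\infty$ iff $d_B(f(a),f(a'))<\infty$, $\frac1L d_A(a,a')-C\le d_B(f(a),f(a'))\le L d_A(a,a')+C$ whenever these are finite, and every point of $B$ is within distance $C$ of $f(A)$. Order-preserving means $s\le t$ in the natural partial order implies $f(s)\le f(t)$ in the partial order of $X$. *)

From Stdlib Require Import Reals List ClassicalEpsilon.
From Coquelicot Require Import Rbar Lub.
Open Scope R_scope.

Record InverseMonoid := {
  im_car :> Type;
  im_mul : im_car -> im_car -> im_car;
  im_one : im_car;
  im_inv : im_car -> im_car;
  im_assoc : forall a b c, im_mul a (im_mul b c) = im_mul (im_mul a b) c;
  im_one_l : forall a, im_mul im_one a = a;
  im_one_r : forall a, im_mul a im_one = a;
  im_inv_1 : forall s, im_mul (im_mul s (im_inv s)) s = s;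
  im_inv_2 : forall s, im_mul (im_mul (im_inv s) s) (im_inv s) = im_inv s;
  im_inv_uniq : forall s t, im_mul (im_mul s t) s = s ->
                  im_mul (im_mul t s) t = t -> t = im_inv s
}.

Arguments im_mul {_}.
Arguments im_one {_}.
Arguments im_inv {_}.

Section Defs.
Variable IM : InverseMonoid.

Definition idem (e : IM) : Prop := im_mul e e = e.

Definition npo (s t : IM) : Prop := exists e, idem e /\ s = im_mul e t.

Definition Lrel (s t : IM) : Prop :=
  im_mul (im_inv s) s = im_mul (im_inv t) t.

Definition quasi_generating (M : list IM) : Prop :=
  (forall g, In g M -> In (im_inv g) M) /\
  (forall s : IM, exists (a : IM) (l : list IM),
      (forall g, In g (a :: l) -> In g M \/ idem g) /\
      s = fold_left im_mul l a).

Definition cayley_edge (M : list IM) (u v : IM) : Prop :=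
  exists g, In g M /\ (im_mul g u = v \/ im_mul g v = u).

Inductive cwalk (M : list IM) : nat -> IM -> IM -> Prop :=
| cw0 : forall u, cwalk M 0 u u
| cwS : forall n u v w, cwalk M n u v -> Lrel v w -> cayley_edge M v w ->
          cwalk M (Datatypes.S n) u w.

(** Cayley metric: infimum of walk lengths (+oo if no walk inside the
    L-class, in particular if s, t are not L-related). *)
Definition cayley_dist (M : list IM) (s t : IM) : Rbar :=
  Glb_Rbar (fun r => exists n, cwalk M n s t /\ r = INR n).

Variables (X : Type) (p : X -> IM) (act : X -> IM -> X) (d : X -> X -> R).

Definition ext_d (x y : X) : Rbar :=
  if excluded_middle_informative (p x = p y) then Finite (d x y) else p_infty.

(** (X, E(S), p) is a presheaf of metric spaces; the presheaf map
    X x E(S) -> X is the restriction of act to idempotents. *)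
Definition presheaf_metric : Prop :=
  (forall x, idem (p x)) /\
  (forall e, idem e -> exists x, p x = e) /\
  (forall x e f, idem e -> idem f -> act (act x e) f = act x (im_mul e f)) /\
  (forall x, act x (p x) = x) /\
  (forall x e, idem e -> p (act x e) = im_mul (p x) e) /\
  (forall x y, p x = p y -> 0 <= d x y) /\
  (forall x y, p x = p y -> (d x y = 0 <-> x = y)) /\
  (forall x y, p x = p y -> d x y = d y x) /\
  (forall x y z, p x = p y -> p y = p z -> d x z <= d x y + d y z) /\
  (forall x y f, p x = p y -> idem f -> d (act x f) (act y f) <= d x y).

Definition geodesic : Prop :=
  forall x y D, ext_d x y = Finite D ->
    exists gamma : R -> X, gamma 0 = x /\ gamma D = y /\
      forall a b, 0 <= a <= D -> 0 <= b <= D ->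
        ext_d (gamma a) (gamma b) = Finite (Rabs (a - b)).

Definition acts : Prop :=
  (forall x s t, act (act x s) t = act x (im_mul s t)) /\
  (forall x s, p (act x s) = im_mul (im_mul (im_inv s) (p x)) s) /\
  (forall x y s, p x = p y -> d (act x s) (act y s) <= d x y).

Definition proper_action : Prop :=
  forall y1 R0, p y1 = im_one -> 0 <= R0 ->
    exists C : list IM, forall s : IM,
      Rbar_le (ext_d (act y1 s) (act y1 (im_mul (im_inv s) s))) (Finite R0) ->
      exists c e, In c C /\ idem e /\ s = im_mul c e.

Definition cobounded_action : Prop :=
  exists x1 T, p x1 = im_one /\ 0 <= T /\
    forall x, exists y s, Rbar_le (ext_d x1 y) (Finite T) /\ x = act y s.

Definition xle (x y : X) : Prop := x = act y (p x).

End Defs.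

Definition quasi_isometry {A B : Type} (dA : A -> A -> Rbar) (dB : B -> B -> Rbar)
  (f : A -> B) : Prop :=
  exists L C, 1 <= L /\ 0 <= C /\
    (forall a a', is_finite (dA a a') <-> is_finite (dB (f a) (f a'))) /\
    (forall a a' u v, dA a a' = Finite u -> dB (f a) (f a') = Finite v ->
        u / L - C <= v <= L * u + C) /\
    (forall b, exists a, Rbar_le (dB b (f a)) (Finite C)).

From Stdlib Require Import Reals List Lra Lia RList Classical_Prop ClassicalEpsilon.
From Coquelicot Require Import Rcomplements Rbar Lub.

(* Fix a basepoint x1 in X_1 and a radius T witnessing coboundedness, and let M be the
   symmetrization of the finite set that properness provides for radius 2T+1.  Whenever
   x1·u and x1·v lie in one fibre at distance at most 2T+1, properness applied to v u^-1
   gives v = c u with c in M.  Hence a geodesic from x1·s to x1·t, cut into unit steps whose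
   endpoints are replaced by orbit points within T, yields a Cayley walk from s to t of
   length at most d(x1·s, x1·t) + 2.  Conversely each Cayley edge moves the orbit point by
   at most K = max_{g in M} d(x1·g, x1·g^-1 g).  The walk from s^-1 s to s shows that M and
   the idempotents generate S, and s = t s^-1 s for s <= t makes the orbit map monotone. *)

Section InverseMonoidTheory.
Variable IM : InverseMonoid.
Local Notation "a ⊗ b" := (@im_mul IM a b) (at level 40, left associativity).
Local Notation inv := (@im_inv IM).

Local Ltac assoc_r := repeat rewrite <- im_assoc.

Lemma inv_inv (s : IM) : inv (inv s) = s.
Proof. symmetry. apply im_inv_uniq; [apply im_inv_2 | apply im_inv_1]. Qed.

Lemma inv_idem (e : IM) : idem IM e -> inv e = e.
Proof. unfold idem; intros He. symmetry. apply im_inv_uniq; rewrite !He; reflexivity. Qed.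

Lemma idem_mulV (s : IM) : idem IM (s ⊗ inv s).
Proof. unfold idem. rewrite im_assoc, im_inv_1. reflexivity. Qed.

Lemma idem_Vmul (s : IM) : idem IM (inv s ⊗ s).
Proof. unfold idem. rewrite im_assoc, im_inv_2. reflexivity. Qed.

(* [(e f)^-1 = f (e f)^-1 e], which makes [(e f)^-1], and hence [e f], idempotent. *)
Lemma idem_mul (e f : IM) : idem IM e -> idem IM f -> idem IM (e ⊗ f).
Proof.
  unfold idem; intros He Hf.
  assert (Hinv : f ⊗ (inv (e ⊗ f) ⊗ e) = inv (e ⊗ f)).
  { apply im_inv_uniq.
    - transitivity ((e ⊗ (f ⊗ f)) ⊗ inv (e ⊗ f) ⊗ ((e ⊗ e) ⊗ f)); [assoc_r; reflexivity|].
      rewrite He, Hf. apply im_inv_1.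
    - transitivity (f ⊗ (inv (e ⊗ f) ⊗ ((e ⊗ e) ⊗ (f ⊗ f)) ⊗ inv (e ⊗ f)) ⊗ e);
        [assoc_r; reflexivity|].
      rewrite He, Hf, im_inv_2. assoc_r. reflexivity. }
  assert (Hinv_idem : inv (e ⊗ f) ⊗ inv (e ⊗ f) = inv (e ⊗ f)).
  { rewrite <- Hinv at 1 2.
    transitivity (f ⊗ (inv (e ⊗ f) ⊗ (e ⊗ f) ⊗ inv (e ⊗ f)) ⊗ e); [assoc_r; reflexivity|].
    rewrite im_inv_2, <- im_assoc. exact Hinv. }
  assert (Hself : e ⊗ f = inv (e ⊗ f)).
  { rewrite <- (inv_inv (e ⊗ f)) at 1. apply inv_idem. exact Hinv_idem. }
  rewrite Hself at 1 2. rewrite Hinv_idem. symmetry. exact Hself.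
Qed.

(* [f e] is an inverse of the idempotent [e f], so it equals [(e f)^-1 = e f]. *)
Lemma idem_comm (e f : IM) : idem IM e -> idem IM f -> e ⊗ f = f ⊗ e.
Proof.
  intros He Hf.
  pose proof (idem_mul e f He Hf) as Hef. pose proof (idem_mul f e Hf He) as Hfe.
  transitivity (inv (e ⊗ f)); [symmetry; apply inv_idem; exact Hef|].
  unfold idem in *. symmetry. apply im_inv_uniq.
  - transitivity ((e ⊗ (f ⊗ f) ⊗ e) ⊗ (e ⊗ f)); [assoc_r; reflexivity|].
    rewrite Hf. transitivity ((e ⊗ f) ⊗ (e ⊗ e) ⊗ f); [assoc_r; reflexivity|].
    rewrite He, <- im_assoc. exact Hef.
  - transitivity ((f ⊗ (e ⊗ e) ⊗ f) ⊗ (f ⊗ e)); [assoc_r; reflexivity|].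
    rewrite He. transitivity ((f ⊗ e) ⊗ (f ⊗ f) ⊗ e); [assoc_r; reflexivity|].
    rewrite Hf, <- im_assoc. exact Hfe.
Qed.

Lemma invM (s t : IM) : inv (s ⊗ t) = inv t ⊗ inv s.
Proof.
  symmetry. apply im_inv_uniq.
  - transitivity (s ⊗ ((t ⊗ inv t) ⊗ (inv s ⊗ s)) ⊗ t); [assoc_r; reflexivity|].
    rewrite (idem_comm (t ⊗ inv t) (inv s ⊗ s)) by (apply idem_mulV || apply idem_Vmul).
    transitivity ((s ⊗ inv s ⊗ s) ⊗ (t ⊗ inv t ⊗ t)); [assoc_r; reflexivity|].
    rewrite !im_inv_1. reflexivity.
  - transitivity (inv t ⊗ ((inv s ⊗ s) ⊗ (t ⊗ inv t)) ⊗ inv s); [assoc_r; reflexivity|].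
    rewrite (idem_comm (inv s ⊗ s) (t ⊗ inv t)) by (apply idem_mulV || apply idem_Vmul).
    transitivity ((inv t ⊗ t ⊗ inv t) ⊗ (inv s ⊗ s ⊗ inv s)); [assoc_r; reflexivity|].
    rewrite !im_inv_2. reflexivity.
Qed.

Lemma mul_conj_idem (e s : IM) : idem IM e -> s ⊗ (inv s ⊗ e ⊗ s) = e ⊗ s.
Proof.
  intros He.
  transitivity ((s ⊗ inv s) ⊗ e ⊗ s); [assoc_r; reflexivity|].
  rewrite (idem_comm (s ⊗ inv s) e) by auto using idem_mulV.
  transitivity (e ⊗ (s ⊗ inv s ⊗ s)); [assoc_r; reflexivity|].
  rewrite im_inv_1. reflexivity.
Qed.

Lemma idem_conj (e s : IM) : idem IM e -> idem IM (inv s ⊗ e ⊗ s).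
Proof.
  intros He. unfold idem.
  transitivity (inv s ⊗ (e ⊗ (s ⊗ inv s)) ⊗ e ⊗ s); [assoc_r; reflexivity|].
  rewrite (idem_comm e (s ⊗ inv s)) by auto using idem_mulV.
  transitivity (inv s ⊗ s ⊗ inv s ⊗ (e ⊗ e) ⊗ s); [assoc_r; reflexivity|].
  rewrite im_inv_2. unfold idem in He. rewrite He. assoc_r. reflexivity.
Qed.

Lemma npo_mul_dom (s t : IM) : npo IM s t -> s = t ⊗ (inv s ⊗ s).
Proof.
  intros [e [He ->]]. rewrite invM, (inv_idem e He).
  transitivity (t ⊗ (inv t ⊗ (e ⊗ e) ⊗ t)); [|assoc_r; reflexivity].
  unfold idem in He. rewrite He, mul_conj_idem by exact He. reflexivity.
Qed.

Lemma Lrel_sym (s t : IM) : Lrel IM s t -> Lrel IM t s.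
Proof. unfold Lrel. auto. Qed.

Lemma Lrel_trans (s t u : IM) : Lrel IM s t -> Lrel IM t u -> Lrel IM s u.
Proof. unfold Lrel. congruence. Qed.

Lemma Lrel_dom (s : IM) : Lrel IM (inv s ⊗ s) s.
Proof. unfold Lrel. rewrite inv_idem by apply idem_Vmul. apply idem_Vmul. Qed.

Lemma Lrel_mulVK (u v : IM) : Lrel IM u v -> v ⊗ inv u ⊗ u = v.
Proof. unfold Lrel. intros Hl. rewrite <- im_assoc, Hl, im_assoc, im_inv_1. reflexivity. Qed.

Lemma Lrel_dom_quot (u v : IM) :
  Lrel IM u v -> inv (v ⊗ inv u) ⊗ (v ⊗ inv u) = u ⊗ inv u.
Proof.
  unfold Lrel. intros Hl. rewrite invM, inv_inv.
  transitivity (u ⊗ (inv v ⊗ v) ⊗ inv u); [assoc_r; reflexivity|].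
  rewrite <- Hl, im_assoc, im_inv_1. reflexivity.
Qed.

(* Writing [c f u = (c u) f'] with [f' = u^-1 f u], the L-relation forces [d(c u) <= f']. *)
Lemma Lrel_mul_idem_cancel (u v c f : IM) :
  Lrel IM u v -> idem IM f -> v = c ⊗ f ⊗ u -> v = c ⊗ u.
Proof.
  unfold Lrel. intros Hl Hf Hv.
  pose proof (idem_conj f u Hf) as Hf'.
  pose proof (mul_conj_idem f u Hf) as Hfu.
  set (f' := inv u ⊗ f ⊗ u) in *.
  assert (Hv' : v = (c ⊗ u) ⊗ f') by (rewrite Hv, <- im_assoc, <- Hfu; assoc_r; reflexivity).
  set (w := c ⊗ u) in *.
  set (h := inv w ⊗ w).
  assert (Hh : idem IM h) by apply idem_Vmul.
  assert (Hdom_v : inv v ⊗ v = h ⊗ f').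
  { rewrite Hv', invM, (inv_idem f' Hf').
    transitivity (f' ⊗ h ⊗ f'); [unfold h; assoc_r; reflexivity|].
    rewrite (idem_comm f' h Hf' Hh), <- im_assoc. unfold idem in Hf'. rewrite Hf'. reflexivity. }
  assert (Hh_le : h ⊗ (inv u ⊗ u) = h).
  { unfold h, w. rewrite invM.
    transitivity (inv u ⊗ inv c ⊗ c ⊗ (u ⊗ inv u ⊗ u)); [assoc_r; reflexivity|].
    rewrite im_inv_1. assoc_r. reflexivity. }
  assert (Hh_f' : h = h ⊗ f').
  { rewrite <- Hh_le at 1. rewrite Hl, Hdom_v, im_assoc. unfold idem in Hh. rewrite Hh. reflexivity. }
  assert (Hw : w = w ⊗ h) by (unfold h; rewrite im_assoc, im_inv_1; reflexivity).
  rewrite Hv'. rewrite Hw at 2. rewrite Hh_f', im_assoc, <- Hw. reflexivity.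
Qed.

Lemma Lrel_mul_fix (g u v : IM) : Lrel IM u v -> g ⊗ u = v -> inv g ⊗ g ⊗ u = u.
Proof.
  unfold Lrel. intros Hl Hg.
  rewrite <- (mul_conj_idem (inv g ⊗ g) u) by apply idem_Vmul.
  transitivity (u ⊗ (inv u ⊗ inv g ⊗ (g ⊗ u))); [assoc_r; reflexivity|].
  rewrite <- invM, Hg, <- Hl, im_assoc, im_inv_1. reflexivity.
Qed.

Lemma Lrel_mul_inv (g u v : IM) : Lrel IM u v -> g ⊗ u = v -> inv g ⊗ v = u.
Proof. intros Hl Hg. rewrite <- Hg, im_assoc. exact (Lrel_mul_fix g u v Hl Hg). Qed.

Lemma fold_left_mul_l (l : list IM) (g a : IM) :
  fold_left (@im_mul IM) l (g ⊗ a) = g ⊗ fold_left (@im_mul IM) l a.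
Proof.
  revert a; induction l as [|x l IH]; intros a; simpl; [reflexivity|].
  rewrite <- im_assoc. apply IH.
Qed.

Definition symmetrize (C : list IM) : list IM := C ++ map inv C.

Lemma symmetrize_inv (C : list IM) g : In g (symmetrize C) -> In (inv g) (symmetrize C).
Proof.
  unfold symmetrize. intros H. apply in_or_app. destruct (in_app_or _ _ _ H) as [H1|H1].
  - right. apply in_map. exact H1.
  - left. apply in_map_iff in H1. destruct H1 as [c [<- Hc]]. rewrite inv_inv. exact Hc.
Qed.

End InverseMonoidTheory.

Section CayleyDistance.
Variables (IM : InverseMonoid) (M : list IM).

Definition generated (x : IM) : Prop :=
  exists (a : IM) (l : list IM),
    (forall g, In g (a :: l) -> In g M \/ idem IM g) /\ x = fold_left im_mul l a.

Lemma cwalk_Lrel n u w : cwalk IM M n u w -> Lrel IM u w.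
Proof.
  induction 1 as [u|n u v w _ IH Hl _]; [reflexivity|]. exact (Lrel_trans IM _ _ _ IH Hl).
Qed.

Lemma cwalk_generated n u w :
  (forall g, In g M -> In (im_inv g) M) -> cwalk IM M n u w -> generated u -> generated w.
Proof.
  intros Msym. induction 1 as [u|n u v w _ IH Hl [g [HM Hg]]]; intros Hu; [exact Hu|].
  destruct (IH Hu) as [a [l [Hal ->]]].
  assert (Hw : exists h, In h M /\ w = im_mul h (fold_left im_mul l a)).
  { destruct Hg as [Hg|Hg]; [exists g; auto|].
    exists (im_inv g). split; [auto|]. symmetry. exact (Lrel_mul_inv IM g w _ (Lrel_sym IM _ _ Hl) Hg). }
  destruct Hw as [h [Hh ->]].
  exists h, (a :: l). split.
  - intros k [<-|Hk]; [left; exact Hh|]. apply Hal; exact Hk.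
  - simpl. symmetry. apply fold_left_mul_l.
Qed.

Local Notation walk_lengths s t := (fun r => exists n, cwalk IM M n s t /\ r = INR n).

Lemma cayley_dist_le_walk n s t :
  cwalk IM M n s t -> Rbar_le (cayley_dist IM M s t) (Finite (INR n)).
Proof. intros Hw. apply (Glb_Rbar_correct (walk_lengths s t)). eauto. Qed.

Lemma cayley_dist_ge s t b :
  (forall n, cwalk IM M n s t -> b <= INR n) -> Rbar_le (Finite b) (cayley_dist IM M s t).
Proof.
  intros Hb. apply (Glb_Rbar_correct (walk_lengths s t)). intros r [n [Hw ->]]. exact (Hb n Hw).
Qed.

Lemma cayley_dist_ge0 s t : Rbar_le (Finite 0) (cayley_dist IM M s t).
Proof. apply cayley_dist_ge. intros n _. apply pos_INR. Qed.

Lemma is_finite_cayley_dist s t :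
  is_finite (cayley_dist IM M s t) <-> exists n, cwalk IM M n s t.
Proof.
  split.
  - intros Hfin. apply NNPP. intros Hnone.
    assert (Hinf : Rbar_le p_infty (cayley_dist IM M s t)).
    { apply (Glb_Rbar_correct (walk_lengths s t)). intros r [n [Hw _]]. exfalso; eauto. }
    rewrite <- Hfin in Hinf. exact Hinf.
  - intros [n Hw]. pose proof (cayley_dist_le_walk n s t Hw) as Hle.
    pose proof (cayley_dist_ge0 s t) as Hge.
    destruct (cayley_dist IM M s t); simpl in *; [reflexivity|contradiction|contradiction].
Qed.

End CayleyDistance.

Section ExtendedDistance.
Variables (IM : InverseMonoid) (X : Type) (p : X -> IM) (d : X -> X -> R).

Lemma ext_d_same_fiber x y : p x = p y -> ext_d IM X p d x y = Finite (d x y).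
Proof. unfold ext_d. destruct excluded_middle_informative; [reflexivity|contradiction]. Qed.

Lemma ext_d_Finite x y r : ext_d IM X p d x y = Finite r -> p x = p y /\ d x y = r.
Proof.
  unfold ext_d. destruct excluded_middle_informative; intros H; [|discriminate].
  injection H. auto.
Qed.

Lemma ext_d_le_Finite x y r :
  Rbar_le (ext_d IM X p d x y) (Finite r) -> p x = p y /\ d x y <= r.
Proof. unfold ext_d. destruct excluded_middle_informative; simpl; [auto|contradiction]. Qed.

Lemma is_finite_ext_d x y : is_finite (ext_d IM X p d x y) <-> p x = p y.
Proof.
  unfold ext_d. destruct excluded_middle_informative as [Hp|Hp]; split; intros H; auto.
  - reflexivity.
  - discriminate.
  - contradiction.
Qed.

Hypothesis d_nonneg : forall x y, p x = p y -> 0 <= d x y.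
Hypothesis geo : geodesic IM X p d.

(* Sample a geodesic at [n = floor D + 1] equally spaced points: steps [D / n <= 1]. *)
Lemma geodesic_chain x y : p x = p y ->
  exists (n : nat) (z : nat -> X), z O = x /\ z n = y /\ INR n <= d x y + 1 /\
    forall k, (k < n)%nat -> p (z k) = p (z (S k)) /\ d (z k) (z (S k)) <= 1.
Proof.
  intros Hxy. set (D := d x y).
  assert (HD : 0 <= D) by exact (d_nonneg x y Hxy).
  destruct (geo x y D (ext_d_same_fiber x y Hxy)) as [gamma [G0 [GD Gd]]].
  destruct (nfloor_ex D HD) as [m Hm].
  set (n := S m). assert (Hn : D < INR n /\ INR n <= D + 1) by (unfold n; rewrite S_INR; lra).
  assert (Hnpos : INR n > 0) by lra.
  clearbody n.
  set (t := fun k => INR k * D / INR n).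
  assert (Ht : forall k, (k <= n)%nat -> 0 <= t k <= D).
  { intros k Hk. apply le_INR in Hk. pose proof (pos_INR k). unfold t. split.
    - apply Rle_div_r; [exact Hnpos|]. rewrite Rmult_0_l. now apply Rmult_le_pos.
    - apply Rle_div_l; [exact Hnpos|]. rewrite Rmult_comm. now apply Rmult_le_compat_l. }
  exists n, (fun k => gamma (t k)). split; [|split; [|split]].
  - replace (t O) with 0 by (unfold t; change (INR O) with 0; field; lra). exact G0.
  - replace (t n) with D by (unfold t; field; lra). exact GD.
  - lra.
  - intros k Hk. destruct (ext_d_Finite _ _ _ (Gd (t k) (t (S k)) (Ht k ltac:(lia)) (Ht (S k) Hk)))
      as [Hp Hd].
    split; [exact Hp|]. rewrite Hd.
    replace (t k - t (S k)) with (- (D / INR n)) by (unfold t; rewrite S_INR; field; lra).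
    rewrite Rabs_Ropp, Rabs_right by (apply Rle_ge, Rle_div_r; lra).
    apply Rle_div_l; lra.
Qed.

End ExtendedDistance.

Section OrbitMap.
Variables (IM : InverseMonoid) (X : Type) (p : X -> IM) (act : X -> IM -> X) (d : X -> X -> R).
Local Notation "a ⊗ b" := (@im_mul IM a b) (at level 40, left associativity).
Local Notation inv := (@im_inv IM).

Hypothesis act_mul : forall x s t, act (act x s) t = act x (s ⊗ t).
Hypothesis p_act : forall x s, p (act x s) = inv s ⊗ p x ⊗ s.
Hypothesis d_act_le : forall x y s, p x = p y -> d (act x s) (act y s) <= d x y.
Hypothesis d_nonneg : forall x y, p x = p y -> 0 <= d x y.
Hypothesis d_refl : forall x, d x x = 0.
Hypothesis d_sym : forall x y, p x = p y -> d x y = d y x.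
Hypothesis d_triangle : forall x y z, p x = p y -> p y = p z -> d x z <= d x y + d y z.
Hypothesis geo : geodesic IM X p d.

Variables (x1 : X) (T : R).
Hypothesis p_x1 : p x1 = im_one.
Hypothesis T_ge0 : 0 <= T.
Hypothesis cobounded : forall x, exists y s,
  Rbar_le (ext_d IM X p d x1 y) (Finite T) /\ x = act y s.

Variable C : list IM.
Hypothesis proper : forall s,
  Rbar_le (ext_d IM X p d (act x1 s) (act x1 (inv s ⊗ s))) (Finite (2 * T + 1)) ->
  exists c e, In c C /\ idem IM e /\ s = c ⊗ e.

Local Notation orb s := (act x1 s).
Local Notation M := (symmetrize IM C).

Lemma p_orbit s : p (orb s) = inv s ⊗ s.
Proof. rewrite p_act, p_x1, im_one_r. reflexivity. Qed.

Lemma orbit_fiber_iff s t : p (orb s) = p (orb t) <-> Lrel IM s t.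
Proof. unfold Lrel. rewrite !p_orbit. tauto. Qed.

Lemma orbit_fiber_dom s : p (orb (inv s ⊗ s)) = p (orb s).
Proof. apply orbit_fiber_iff, Lrel_dom. Qed.

Lemma orbit_close_adjacent u v : Lrel IM u v -> d (orb u) (orb v) <= 2 * T + 1 ->
  exists c, In c M /\ c ⊗ u = v.
Proof.
  intros Hl Hd. set (g := v ⊗ inv u).
  assert (Hfib : p (orb u) = p (orb v)) by (apply orbit_fiber_iff; exact Hl).
  destruct (proper g) as [c [e [Hc [He Hg]]]].
  { rewrite ext_d_same_fiber by (symmetry; apply orbit_fiber_dom). simpl.
    unfold g at 2 3. rewrite (Lrel_dom_quot IM u v Hl). unfold g. rewrite <- !act_mul.
    apply Rle_trans with (d (orb v) (orb u)); [apply d_act_le; symmetry; exact Hfib|].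
    rewrite d_sym by (symmetry; exact Hfib). exact Hd. }
  exists c. split; [apply in_or_app; left; exact Hc|].
  symmetry. apply (Lrel_mul_idem_cancel IM u v c e Hl He).
  rewrite <- Hg. unfold g. symmetry. apply Lrel_mulVK. exact Hl.
Qed.

Definition step_bound : R :=
  Rmax 0 (MaxRlist (map (fun g => d (orb g) (orb (inv g ⊗ g))) M)).

Lemma step_bound_ge0 : 0 <= step_bound.
Proof. apply Rmax_l. Qed.

Lemma edge_length g u v : In g M -> Lrel IM u v -> g ⊗ u = v ->
  d (orb u) (orb v) <= step_bound.
Proof.
  intros HM Hl Hg.
  assert (Hu : orb u = act (orb (inv g ⊗ g)) u)
    by (rewrite act_mul, (Lrel_mul_fix IM g u v Hl Hg); reflexivity).
  assert (Hv : orb v = act (orb g) u) by (rewrite act_mul, Hg; reflexivity).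
  rewrite Hu, Hv. eapply Rle_trans; [apply d_act_le, orbit_fiber_dom|].
  rewrite d_sym by apply orbit_fiber_dom.
  eapply Rle_trans; [|apply Rmax_r]. apply MaxRlist_P1.
  apply (in_map (fun g => d (orb g) (orb (inv g ⊗ g)))). exact HM.
Qed.

Lemma cayley_edge_length v w : Lrel IM v w -> cayley_edge IM M v w ->
  d (orb v) (orb w) <= step_bound.
Proof.
  intros Hl [g [HM [Hg|Hg]]]; [eapply edge_length; eauto|].
  rewrite d_sym by (apply orbit_fiber_iff; exact Hl).
  eapply edge_length; eauto. apply Lrel_sym; exact Hl.
Qed.

Lemma walk_length n u w : cwalk IM M n u w -> d (orb u) (orb w) <= step_bound * INR n.
Proof.
  induction 1 as [u|n u v w Hw IH Hl He].
  - rewrite d_refl, Rmult_0_r. apply Rle_refl.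
  - pose proof (cayley_edge_length v w Hl He).
    eapply Rle_trans; [apply d_triangle; apply orbit_fiber_iff; eauto using cwalk_Lrel|].
    rewrite S_INR. lra.
Qed.

Definition represents u z : Prop := p (orb u) = p z /\ d (orb u) z <= T.

Lemma represents_exists z : exists u, represents u z.
Proof.
  destruct (cobounded z) as [y [s [Hy ->]]]. apply ext_d_le_Finite in Hy.
  destruct Hy as [Hp Hd]. exists s. split.
  - rewrite !p_act, Hp. reflexivity.
  - eapply Rle_trans; [apply d_act_le; exact Hp|exact Hd].
Qed.

Lemma represents_orbit s : represents s (orb s).
Proof. split; [reflexivity|]. rewrite d_refl. exact T_ge0. Qed.

Lemma represents_adjacent u u' z z' : represents u z -> represents u' z' ->
  p z = p z' -> d z z' <= 1 -> Lrel IM u u' /\ cayley_edge IM M u u'.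
Proof.
  intros [Hp Hd] [Hp' Hd'] Hpz Hdz.
  assert (Hl : Lrel IM u u') by (apply orbit_fiber_iff; congruence).
  split; [exact Hl|].
  destruct (orbit_close_adjacent u u' Hl) as [c [Hc Hcu]]; [|exists c; auto].
  eapply Rle_trans; [apply (d_triangle _ z); congruence|].
  eapply Rle_trans; [apply Rplus_le_compat_l, (d_triangle _ z'); congruence|].
  rewrite (d_sym z' (orb u')) by congruence. lra.
Qed.

Lemma orbit_walk s t : Lrel IM s t ->
  exists n, cwalk IM M n s t /\ INR n <= d (orb s) (orb t) + 2.
Proof.
  intros Hl.
  destruct (geodesic_chain IM X p d d_nonneg geo (orb s) (orb t))
    as [n [z [Hz0 [Hzn [Hn Hsteps]]]]]; [apply orbit_fiber_iff; exact Hl|].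
  assert (Hlift : forall k, (k <= n)%nat -> exists u, represents u (z k) /\ cwalk IM M k s u).
  { induction k as [|k IH]; intros Hk.
    - exists s. rewrite Hz0. split; [apply represents_orbit|constructor].
    - destruct IH as [u [Hu Hw]]; [lia|].
      destruct (represents_exists (z (S k))) as [u' Hu'].
      destruct (Hsteps k Hk) as [Hp Hd].
      destruct (represents_adjacent u u' _ _ Hu Hu' Hp Hd) as [Hl' He].
      exists u'. split; [exact Hu'|]. econstructor; eauto. }
  destruct (Hlift n (le_n n)) as [u [Hu Hw]]. rewrite Hzn in Hu.
  destruct (represents_adjacent u t _ _ Hu (represents_orbit t) eq_refl) as [Hl' He];
    [rewrite d_refl; lra|].
  exists (S n). split; [econstructor; eauto|]. rewrite S_INR. lra.
Qed.

Lemma symmetrize_quasi_generating : quasi_generating IM M.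
Proof.
  split; [apply symmetrize_inv|]. intros s.
  destruct (orbit_walk _ _ (Lrel_dom IM s)) as [n [Hw _]].
  apply (cwalk_generated IM M n _ s (symmetrize_inv IM C) Hw).
  exists (inv s ⊗ s), nil. split; [|reflexivity].
  intros g [<-|[]]. right. apply idem_Vmul.
Qed.

Lemma orbit_map_monotone s t : npo IM s t -> xle IM X p act (orb s) (orb t).
Proof.
  intros Hst. unfold xle. rewrite act_mul, p_orbit, <- npo_mul_dom by exact Hst. reflexivity.
Qed.

Lemma orbit_map_finite_iff a a' :
  is_finite (cayley_dist IM M a a') <-> is_finite (ext_d IM X p d (orb a) (orb a')).
Proof.
  rewrite is_finite_cayley_dist, is_finite_ext_d, orbit_fiber_iff. split.
  - intros [n Hw]. exact (cwalk_Lrel IM M n a a' Hw).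
  - intros Hl. destruct (orbit_walk a a' Hl) as [n [Hw _]]. eauto.
Qed.

Lemma orbit_map_dist_bounds a a' u v :
  cayley_dist IM M a a' = Finite u -> ext_d IM X p d (orb a) (orb a') = Finite v ->
  u / (step_bound + 1) - (T + 2) <= v <= (step_bound + 1) * u + (T + 2).
Proof.
  intros Hu Hv. apply ext_d_Finite in Hv. destruct Hv as [Hp <-].
  pose proof step_bound_ge0 as HK.
  assert (Hu0 : 0 <= u) by (pose proof (cayley_dist_ge0 IM M a a') as H; rewrite Hu in H; exact H).
  destruct (orbit_walk a a' (proj1 (orbit_fiber_iff a a') Hp)) as [n [Hw Hn]].
  assert (Hun : u <= INR n)
    by (pose proof (cayley_dist_le_walk IM M n a a' Hw) as H; rewrite Hu in H; exact H).
  assert (Hvu : d (orb a) (orb a') / (step_bound + 1) <= u).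
  { assert (H : Rbar_le (Finite (d (orb a) (orb a') / (step_bound + 1))) (cayley_dist IM M a a')).
    { apply cayley_dist_ge. intros m Hm. pose proof (walk_length m a a' Hm). pose proof (pos_INR m).
      apply Rle_div_l; nra. }
    rewrite Hu in H. exact H. }
  apply Rle_div_l in Hvu; [|lra].
  assert (u / (step_bound + 1) <= u) by (apply Rle_div_l; nra).
  split; nra.
Qed.

Lemma orbit_map_coarsely_onto z : exists a, Rbar_le (ext_d IM X p d z (orb a)) (Finite (T + 2)).
Proof.
  destruct (represents_exists z) as [u [Hp Hd]]. exists u.
  rewrite ext_d_same_fiber by (symmetry; exact Hp). simpl.
  rewrite d_sym by (symmetry; exact Hp). lra.
Qed.

Lemma orbit_map_quasi_isometry :
  quasi_isometry (cayley_dist IM M) (ext_d IM X p d) (fun s => orb s).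
Proof.
  exists (step_bound + 1), (T + 2). pose proof step_bound_ge0.
  split; [lra|]. split; [lra|]. split; [|split].
  - apply orbit_map_finite_iff.
  - apply orbit_map_dist_bounds.
  - apply orbit_map_coarsely_onto.
Qed.

End OrbitMap.

Theorem theorem2p4 (S : InverseMonoid) (X : Type) (p : X -> S)
  (act : X -> S -> X) (d : X -> X -> R) :
  presheaf_metric S X p act d ->
  geodesic S X p d ->
  acts S X p act d ->
  proper_action S X p act d ->
  cobounded_action S X p act d ->
  exists M : list S, quasi_generating S M /\
    exists x1 : X, p x1 = im_one /\
      (forall s t, npo S s t -> xle S X p act (act x1 s) (act x1 t)) /\
      quasi_isometry (cayley_dist S M) (ext_d S X p d) (fun s => act x1 s).
Proof.
  intros Hpre Hgeo Hacts Hprop Hcob.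
  destruct Hpre as (_ & _ & _ & _ & _ & Hd0 & Hdxx & Hsym & Htri & _).
  destruct Hacts as (Hact & Hpact & Hdnon).
  destruct Hcob as (x1 & T & Hx1 & HT & Hcob).
  destruct (Hprop x1 (2 * T + 1) Hx1) as [C HC]; [lra|].
  assert (Hrefl : forall x, d x x = 0) by (intros x; apply Hdxx; reflexivity).
  exists (symmetrize S C). split; [eapply symmetrize_quasi_generating; eauto|].
  exists x1. split; [exact Hx1|]. split.
  - eapply orbit_map_monotone; eauto.
  - eapply orbit_map_quasi_isometry; eauto.
Qed.
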